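(* Let $\lambda>0$ and let $\xi_1,\xi_2,\ldots$ be i.i.d. exponential random variables with parameter $\lambda$. For $n\ge 2$ set $\theta^\star_n=\lambda^{-1}\log n$ and, for $k=1,\ldots,n$, $$D_{n,k}(\theta^\star_n)=\sum_{\ell=1,\ \ell\ne k}^n\mathbf{1}[\xi_k+\xi_\ell>\theta^\star_n].$$ Then for each $d=0,1,2,\ldots$, the sequence of random variables $\left\{\frac1n\sum_{k=1}^n\mathbf{1}[D_{n,k}(\theta^\star_n)=d],\ n=2,3,\ldots\right\}$ does not converge in probability to any constant.
   Context: $D_{n,k}(\theta)$ is the degree of node $k$ in the random threshold graph on nodes $\{1,\ldots,n\}$ in which distinct nodes $k,\ell$ are adjacent iff $\xi_k+\xi_\ell>\theta$, where $\xi_k$ is the fitness of node $k$. An exponential random variable with parameter $\lambda$ has $\mathbb{P}[\xi\le x]=1-e^{-\lambda\max(x,0)}$. *)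

From HB Require Import structures.
From mathcomp Require Import all_boot all_order all_algebra.
From mathcomp Require Import all_classical all_reals all_analysis.
Set Implicit Arguments. Unset Strict Implicit. Unset Printing Implicit Defensive.
Import Order.TTheory GRing.Theory Num.Theory Num.Def.
Local Open Scope classical_set_scope.
Local Open Scope ring_scope.

Definition mutually_independent {d : measure_display} {T : measurableType d}
  {R : realType} (P : probability T R) (X : nat -> T -> R) : Prop :=
  forall (s : seq nat) (B : nat -> set R),
    uniq s -> (forall i, measurable (B i)) ->
    P (\big[setI/setT]_(i <- s) (X i @^-1` B i)) =
    \big[*%E/1%E]_(i <- s) P (X i @^-1` B i).

Definition exponential_rv {d : measure_display} {T : measurableType d}
  {R : realType} (P : probability T R) (lam : R) (X : T -> R) : Prop :=
  forall x : R, P [set t | X t <= x] = (1 - expR (- lam * maxr x 0))%:E.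

Definition tdegree {T : Type} {R : realType} (X : nat -> T -> R) (n : nat)
  (th : R) (k : 'I_n) (t : T) : nat :=
  #|[set l : 'I_n | (l != k) && (th < X k t + X l t)]|.

Arguments tdegree {T R} X n th k t.

Definition frac_degree {T : Type} {R : realType} (X : nat -> T -> R)
  (n : nat) (th : R) (dg : nat) (t : T) : R :=
  (\sum_(k < n) ((tdegree X n th k t == dg) : nat)%:R) / n%:R.

Definition theta_star {R : realType} (lam : R) (n : nat) : R :=
  lam^-1 * ln n%:R.

Definition cvg_in_prob {d : measure_display} {T : measurableType d}
  {R : realType} (P : probability T R) (Y : nat -> T -> R) (c : R) : Prop :=
  forall eps : R, 0 < eps ->
    (fun n => P [set t | eps < `|Y n t - c|]) @ \oo --> (0%:E : \bar R).

From HB Require Import structures.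
From mathcomp Require Import all_boot all_order all_algebra.
From mathcomp Require Import all_classical all_reals all_analysis.
From mathcomp Require Import ring lra zify.
Import Order.TTheory GRing.Theory Num.Theory Num.Def.
Local Open Scope classical_set_scope.
Local Open Scope ring_scope.

(* Write th for theta_star lam n and call a fitness high if it exceeds th + 1 (probability
   e^-lam / n), middle if it lies in ]-1, th - 1] (probability 1 - e^lam / n) and low if it
   lies in ]-1, 1].  When every fitness is middle or high, each node is adjacent to all the
   other high nodes, and a node of low fitness is adjacent to the high nodes only.  The number
   of high nodes on this event is asymptotically Poisson, hence for n large:
   - with probability at least kappa (d + 2) > 0 there are d + 2 high nodes, so that every
     degree exceeds d and the proportion of nodes of degree d is 0;
   - each node has degree d with probability at least b = degree_lb lam d > 0, so the
     proportion, whose mean is at least b, exceeds b / 2 with probability at least b / 2.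
   The first point excludes every limit c with |c| >= b / 4, the second every other c. *)

Section finite_measurability.
Context {d : measure_display} {T : measurableType d}.

Lemma measurable_forall_fin (J : finType) (A : J -> set T) :
  (forall j, measurable (A j)) -> measurable [set t | forall j, A j t].
Proof.
move=> mA; have -> : [set t | forall j, A j t] = \bigcap_(j in [set: J]) A j.
  by apply/seteqP; split=> [t tA j _|t tA j] //; exact: tA.
exact: fin_bigcap_measurable finite_finset _.
Qed.

Lemma measurable_fin_preimage (V : finType) (W : T -> V) (A : set V) :
  (forall v, measurable (W @^-1` [set v])) -> measurable (W @^-1` A).
Proof.
move=> mW; have -> : W @^-1` A = \bigcup_(v in A) W @^-1` [set v].
  by apply/seteqP; split=> [t At|t [v Av /= ->]] //; exists (W t).
exact: fin_bigcup_measurable finite_finset _.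
Qed.

Lemma measurable_finset_preimage (J : finType) (S : T -> {set J}) (A : set {set J}) :
  (forall j, measurable [set t | j \in S t]) -> measurable (S @^-1` A).
Proof.
move=> mS; apply: measurable_fin_preimage => B.
have -> : S @^-1` [set B] = [set t | forall j, (j \in S t) = (j \in B)].
  by apply/seteqP; split=> [t /= <- | t /= SB] //; apply/setP.
suff mSB j : measurable [set t | (j \in S t) = (j \in B)] by exact: measurable_forall_fin mSB.
case: (j \in B); first exact: mS.
have -> : [set t | (j \in S t) = false] = ~` [set t | j \in S t].
  by apply/seteqP; split=> t /=; [move/negbT/negP | move/negP/negbTE].
exact: measurableC.
Qed.

End finite_measurability.

Section finite_additivity.
Context {d : measure_display} {T : measurableType d} {R : realType}.
Variable mu : {measure set T -> \bar R}.

Lemma measure_fin_partition (V : finType) (W : T -> V) (E : set T) (A : {pred V}) :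
  measurable E -> (forall v, measurable (W @^-1` [set v])) ->
  mu (E `&` W @^-1` [set v | A v]) = (\sum_(v | A v) mu (E `&` W @^-1` [set v]))%E.
Proof.
move=> mE mW.
have -> : E `&` W @^-1` [set v | A v] = \bigcup_(v in [set` A]) (E `&` W @^-1` [set v]).
  by apply/seteqP; split=> [t [Et At]|t [v Av [Et /= ->]]] //; exists (W t).
rewrite measure_fin_bigcup //; first last.
- by move=> v _; exact: measurableI.
- by move=> v w _ _ [t [[_ /= <-] [_ /=]]].
by rewrite -(bigfs _ (r := index_enum V)) ?index_enum_uniq // => v _; rewrite mem_index_enum.
Qed.

End finite_additivity.

Definition Pr {d : measure_display} {T : measurableType d} {R : realType}
  (P : probability T R) (E : set T) : R := fine (P E).

Section probability.
Context {d : measure_display} {T : measurableType d} {R : realType}.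
Variable P : probability T R.

Lemma PrE (E : set T) : measurable E -> P E = (Pr P E)%:E.
Proof. by move=> mE; rewrite fineK // fin_num_measure. Qed.

Lemma Pr_le (A B : set T) :
  measurable A -> measurable B -> A `<=` B -> Pr P A <= Pr P B.
Proof. by move=> mA mB AB; rewrite -lee_fin -!PrE // le_measure // inE. Qed.

Lemma Pr_fin_partition (V : finType) (W : T -> V) (E : set T) (A : {pred V}) :
  measurable E -> (forall v, measurable (W @^-1` [set v])) ->
  Pr P (E `&` W @^-1` [set v | A v]) = \sum_(v | A v) Pr P (E `&` W @^-1` [set v]).
Proof.
move=> mE mW; apply/EFin_inj; rewrite -sumEFin -PrE; last first.
  by apply: measurableI => //; exact: measurable_fin_preimage.
rewrite measure_fin_partition //; apply: eq_bigr => v _.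
by rewrite -PrE //; exact: measurableI.
Qed.

(* The left-hand side is #|J| times the mean of the proportion #|S t| / #|J|, a variable with
   values in [0, 1]. *)
Lemma sum_Pr_mem_le (J : finType) (S : T -> {set J}) (eps : R) :
  (forall j, measurable [set t | j \in S t]) -> 0 <= eps ->
  \sum_j Pr P [set t | j \in S t] <=
  #|J|%:R * (eps + Pr P [set t | eps < #|S t|%:R / #|J|%:R]).
Proof.
move=> mS eps_ge0; pose q B := Pr P (S @^-1` [set B]).
have mSB B : measurable (S @^-1` [set B]) by exact: measurable_finset_preimage.
have Pr_event (A : {pred {set J}}) : Pr P (S @^-1` [set B | A B]) = \sum_(B | A B) q B.
  by rewrite -[S @^-1` _]setTI Pr_fin_partition //; under eq_bigr do rewrite setTI.
have q_ge0 B : 0 <= q B by rewrite /Pr fine_ge0 // measure_ge0.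
have -> : \sum_j Pr P [set t | j \in S t] = \sum_(B : {set J}) #|B|%:R * q B.
  under eq_bigr => j _ do rewrite (Pr_event (fun B : {set J} => j \in B)).
  rewrite (exchange_big_dep predT) //=; apply: eq_bigr => B _.
  by rewrite sumr_const mulr_natl.
have -> : Pr P [set t | eps < #|S t|%:R / #|J|%:R] =
    \sum_(B : {set J} | eps < #|B|%:R / #|J|%:R) q B by rewrite -Pr_event.
have sum_q : \sum_(B : {set J}) q B = 1.
  rewrite -(Pr_event predT) (_ : _ @^-1` _ = setT) /Pr ?probability_setT //.
  exact/seteqP.
apply: (@le_trans _ _ (\sum_(B : {set J}) (#|J|%:R * eps * q B +
    #|J|%:R * (if eps < #|B|%:R / #|J|%:R then q B else 0)))); last first.
  by rewrite big_split /= -!mulr_sumr sum_q -big_mkcond mulr1 mulrDr.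
apply: ler_sum => B _; case: ifPn => [lt_eps|].
  rewrite -[X in X <= _]add0r; apply: lerD; first by rewrite !mulr_ge0.
  by rewrite ler_wpM2r // ler_nat max_card.
rewrite -leNgt mulr0 addr0 => le_eps; rewrite ler_wpM2r //.
have [J0|J_gt0] := posnP #|J|.
  by move: (max_card (mem B)); rewrite J0 leqn0 => /eqP ->; rewrite mul0r.
by rewrite mulrC -ler_pdivrMr // ltr0n.
Qed.

Lemma not_cvg_in_prob (Y : nat -> T -> R) (c eps gam : R) : 0 < eps -> 0 < gam ->
  (\forall n \near \oo, gam <= Pr P [set t | eps < `|Y n t - c|]) ->
  ~ cvg_in_prob P Y c.
Proof.
move=> eps_gt0 gam_gt0 lb /(_ eps eps_gt0)/fine_cvgP[_ Pr_cvg0].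
have [n [gam_le /=]] := filter_ex (filterI lb (cvgr_lt 0 Pr_cvg0 gam gam_gt0)).
by rewrite /Pr ltNge gam_le.
Qed.

End probability.

Section exponential.
Context {d : measure_display} {T : measurableType d} {R : realType}.
Context {P : probability T R} {lam : R} {X : T -> R}.
Hypotheses (X_meas : measurable_fun [set: T] X) (X_exp : exponential_rv P lam X).

Let mX (I : interval R) : measurable (X @^-1` [set` I]).
Proof. by rewrite -[_ @^-1` _]setTI; exact: X_meas. Qed.

Lemma Pr_exponential_le (b : R) :
  Pr P (X @^-1` [set` `]-oo, b]]) = 1 - expR (- lam * maxr b 0).
Proof. by rewrite /Pr (_ : _ @^-1` _ = [set t | X t <= b]) ?X_exp. Qed.

Lemma Pr_exponential_gt (a : R) :
  Pr P (X @^-1` [set` `]a, +oo[]) = expR (- lam * maxr a 0).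
Proof.
have -> : X @^-1` [set` `]a, +oo[] = ~` (X @^-1` [set` `]-oo, a]]).
  by apply/seteqP; split=> t /=; rewrite !in_itv /= andbT ltNge => /negP.
apply/EFin_inj; rewrite -PrE ?probability_setC ?(PrE P) ?Pr_exponential_le //.
  by rewrite -EFinB opprB addrC subrK.
exact: measurableC.
Qed.

Lemma Pr_exponential_itv (a b : R) : a <= b ->
  Pr P (X @^-1` [set` `]a, b]]) = expR (- lam * maxr a 0) - expR (- lam * maxr b 0).
Proof.
move=> le_ab.
have split_b : X @^-1` [set` `]-oo, b]] = X @^-1` [set` `]-oo, a]] `|` X @^-1` [set` `]a, b]].
  apply/seteqP; split=> t /=; rewrite !in_itv /=.
    by case: (leP (X t) a) => /= ?; [left | right].
  by case=> [/le_trans -> // | /andP[]].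
have disj : X @^-1` [set` `]-oo, a]] `&` X @^-1` [set` `]a, b]] = set0.
  apply/seteqP; split=> t //= []; rewrite !in_itv /= => Xa /andP[aX _].
  by move: (le_lt_trans Xa aX); rewrite ltxx.
have : Pr P (X @^-1` [set` `]-oo, b]]) =
    Pr P (X @^-1` [set` `]-oo, a]]) + Pr P (X @^-1` [set` `]a, b]]).
  by apply/EFin_inj; rewrite EFinD -!(PrE P) // split_b measureU.
rewrite !Pr_exponential_le; lra.
Qed.

End exponential.

Definition fit_high {R : realType} (th : R) : interval R := `]th + 1, +oo[.
Definition fit_mid {R : realType} (th : R) : interval R := `]-1, th - 1].
Definition fit_low {R : realType} : interval R := `]-1, 1].

Lemma in_fit_high {R : realType} (th x : R) : (x \in fit_high th) = (th + 1 < x).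
Proof. by rewrite in_itv /= andbT. Qed.

Lemma in_fit_mid {R : realType} (th x : R) : (x \in fit_mid th) = (-1 < x <= th - 1).
Proof. by rewrite in_itv. Qed.

Lemma in_fit_low {R : realType} (x : R) : (x \in fit_low) = (-1 < x <= 1).
Proof. by rewrite in_itv. Qed.

Section threshold_graph.
Context {T : Type} {R : realType}.
Variables (xi : nat -> T -> R) (n : nat) (th : R).

Definition high_nodes (t : T) : {set 'I_n} := [set i : 'I_n | xi i t \in fit_high th]%SET.

Definition separated : set T :=
  [set t | forall i : 'I_n, xi i t \in fit_mid th \/ xi i t \in fit_high th].

Definition degree_set (dg : nat) (t : T) : {set 'I_n} :=
  [set k : 'I_n | tdegree xi n th k t == dg]%SET.

Lemma tdegreeE (k : 'I_n) (t : T) :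
  tdegree xi n th k t = #|[set l | (l != k) && (th < xi k t + xi l t)]%SET|.
Proof. by apply: eq_card => l; rewrite inE unfold_in asboolb. Qed.

Lemma frac_degreeE (dg : nat) (t : T) :
  frac_degree xi n th dg t = #|degree_set dg t|%:R / n%:R.
Proof.
rewrite /frac_degree /degree_set -sum1dep_card natr_sum [in RHS]big_mkcond.
by congr (_ / _); apply: eq_bigr => k _; case: ifP.
Qed.

Lemma tdegree_fit_low (k : 'I_n) (t : T) : 2 <= th -> separated t ->
  xi k t \in fit_low -> tdegree xi n th k t = #|high_nodes t|.
Proof.
rewrite tdegreeE in_fit_low => th_ge2 sep /andP[k_gt k_le].
apply: eq_card => l; rewrite !finset.in_set in_fit_high.
have [|] := sep l; rewrite ?in_fit_mid ?in_fit_high.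
  move=> /andP[_ l_le].
  have -> : (th + 1 < xi l t) = false by apply/negbTE; rewrite -leNgt; lra.
  have -> : (th < xi k t + xi l t) = false by apply/negbTE; rewrite -leNgt; lra.
  by rewrite andbF.
move=> l_gt; rewrite l_gt (_ : th < _) ?andbT; last by lra.
by apply/eqP => lk; move: l_gt; rewrite lk; lra.
Qed.

Lemma card_high_nodes_le (k : 'I_n) (t : T) : 0 <= th ->
  separated t -> (#|high_nodes t| <= (tdegree xi n th k t).+1)%N.
Proof.
move=> th_ge0 sep; have xik_gt : -1 < xi k t.
  by case: (sep k); rewrite ?in_fit_mid ?in_fit_high; [case/andP | move=> ?; lra].
rewrite tdegreeE (cardsD1 k (high_nodes t)) -add1n; apply: leq_add; first exact: leq_b1.
apply: subset_leq_card; apply/fintype.subsetP => l.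
rewrite in_setD1 !finset.in_set in_fit_high => /andP[-> l_gt] /=; lra.
Qed.

Lemma frac_degree_eq0 (dg : nat) (t : T) : 0 <= th -> separated t ->
  #|high_nodes t| = dg.+2 -> frac_degree xi n th dg t = 0.
Proof.
move=> th_ge0 sep card_high; rewrite /frac_degree big1 ?mul0r // => k _.
case: eqP => // deg_k; have := card_high_nodes_le k t th_ge0 sep.
by rewrite card_high deg_k ltnn.
Qed.

Lemma separated_high_nodesE (S : {set 'I_n}) :
  separated `&` high_nodes @^-1` [set S] =
  [set t | forall i : 'I_n, xi i t \in (if i \in S then fit_high th else fit_mid th)].
Proof.
apply/seteqP; split=> t /=.
  move=> [sep <-] i; rewrite finset.in_set; case: ifPn => // not_high.
  by case: (sep i) => //; rewrite (negbTE not_high).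
move=> h; split=> [i | ].
  by have := h i; case: (i \in S) => ?; [right | left].
apply/setP => i; rewrite finset.in_set; have := h i; case: (i \in S) => //.
by rewrite in_fit_mid in_fit_high => /andP[_ ?]; apply/negbTE; rewrite -leNgt; lra.
Qed.

Lemma separated_low_high_nodesE (S : {set 'I_n}) (k : 'I_n) : 2 <= th -> k \notin S ->
  separated `&` xi k @^-1` [set` fit_low] `&` high_nodes @^-1` [set S] =
  [set t | forall i : 'I_n, xi i t \in
    (if i \in S then fit_high th else if i == k then fit_low else fit_mid th)].
Proof.
move=> th_ge2 kS; rewrite setIAC separated_high_nodesE; apply/seteqP; split=> t /=.
  by move=> [h low_k] i; have := h i; case: (i \in S) => //; case: eqP => [->|].
move=> h; split=> [i | ]; last by have := h k; rewrite (negbTE kS) eqxx.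
have := h i; case: (i \in S) => //; case: (i == k) => //.
by rewrite in_fit_low in_fit_mid => /andP[? ?]; apply/andP; split; lra.
Qed.

End threshold_graph.

Section estimates.
Context {R : realType}.

Lemma expR_neg_double_le (x : R) : 0 <= x <= 1 / 2 -> expR (- (2 * x)) <= 1 - x.
Proof.
case/andP=> x_ge0 x_le; rewrite expRN.
have pos : 0 < 1 + 2 * x by lra.
apply: le_trans (_ : (1 + 2 * x)^-1 <= _).
  by rewrite lef_pV2 ?posrE ?expR_gt0 // expR_ge1Dx.
have prod_ge0 : 0 <= x * (1 - 2 * x) by rewrite mulr_ge0 //; lra.
by rewrite -[X in X <= _]mul1r ler_pdivrMr //; nra.
Qed.

Lemma pow_1B_ge (a : R) (n k : nat) : 0 <= a -> 2 * a <= n%:R -> (k <= n)%N ->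
  expR (- (2 * a)) <= (1 - a / n%:R) ^+ k.
Proof.
move=> a_ge0 a_le le_kn; have [n0|n_gt0] := posnP n.
  by move: le_kn a_le; rewrite n0 leqn0 => /eqP -> ?; rewrite expr0 expR_le1; lra.
have n_pos : (0 : R) < n%:R by rewrite ltr0n.
have x_ge0 : 0 <= a / n%:R by rewrite divr_ge0 ?ler0n.
have x_le : a / n%:R <= 1 / 2 by rewrite ler_pdivrMr //; lra.
apply: le_trans (_ : (1 - a / n%:R) ^+ n <= _); last first.
  rewrite -[X in _ ^+ X <= _](subnK le_kn) exprD ler_piMl ?exprn_ge0 ?exprn_ile1 //; lra.
have -> : - (2 * a) = - (2 * (a / n%:R)) * n%:R by field; lra.
by rewrite expRM_natr lerXn2r ?nnegrE ?expR_ge0 ?expR_neg_double_le ?x_ge0 //; lra.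
Qed.

Lemma ffact_ge (N m : nat) : ((N - m) ^ m <= N ^_ m)%N.
Proof.
elim: m N => [|m IH] [|N] //=; first by rewrite sub0n exp0n.
by rewrite ffactSS subSS expnS leq_mul // (leq_trans (leq_subr _ _)).
Qed.

(* A lower bound for C(N, m) (e^-lam / n)^m (1 - e^lam / n)^(N - m) when n is large and
   N is n or n - 1, from C(N, m) m! >= (N - m)^m >= (n / 2)^m and
   (1 - e^lam / n)^(N - m) >= exp (-2 e^lam). *)
Definition kappa (lam : R) (m : nat) : R :=
  (expR (- lam) / 2) ^+ m / m`!%:R * expR (- (2 * expR lam)).

Lemma kappa_gt0 (lam : R) (m : nat) : 0 < kappa lam m.
Proof.
by rewrite /kappa !mulr_gt0 ?invr_gt0 ?exprn_gt0 ?mulr_gt0 ?invr_gt0 ?ltr0n ?fact_gt0 ?expR_gt0.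
Qed.

Definition degree_lb (lam : R) (dg : nat) : R := kappa lam dg * (1 - expR (- lam)).

Lemma degree_lb_gt0 (lam : R) (dg : nat) : 0 < lam -> 0 < degree_lb lam dg.
Proof. by move=> lam_gt0; rewrite mulr_gt0 ?kappa_gt0 // subr_gt0 expR_lt1 oppr_lt0. Qed.

Definition big_enough (lam : R) (m n : nat) : Prop :=
  [/\ (2 * m + 2 <= n)%N, expR (2 * lam) <= n%:R & 2 * expR lam <= n%:R].

Lemma big_enough_near (lam : R) (m : nat) : \forall n \near \oo, big_enough lam m n.+2.
Proof.
have [N _ geN] := nbhs_infty_ger (expR (2 * lam) + 2 * expR lam + (2 * m + 2)%N%:R).
exists N => // n /geN le_n; have := expR_gt0 lam; have := expR_gt0 (2 * lam).
have : (0 : R) <= (2 * m + 2)%N%:R := ler0n _ _.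
have : (n%:R : R) <= n.+2%:R by rewrite ler_nat; lia.
by split; [rewrite -(ler_nat R) | |]; lra.
Qed.

Lemma binomial_term_ge (lam : R) (m n N : nat) : big_enough lam m n ->
  (N <= n <= N.+1)%N ->
  kappa lam m <=
  'C(N, m)%:R * (expR (- lam) / n%:R) ^+ m * (1 - expR lam / n%:R) ^+ (N - m).
Proof.
move=> [le_mn _ le_exp] /andP[le_Nn le_nN].
have n_pos : (0 : R) < n%:R by rewrite ltr0n; lia.
have binom_ge : (n%:R / 2) ^+ m <= 'C(N, m)%:R * m`!%:R :> R.
  rewrite -natrM bin_ffact; apply: le_trans (_ : ((N - m) ^ m)%:R <= _); last first.
    by rewrite ler_nat ffact_ge.
  rewrite natrX lerXn2r ?nnegrE ?divr_ge0 ?ler0n // ler_pdivrMr // -natrM ler_nat; lia.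
rewrite /kappa ler_pM ?mulr_ge0 ?invr_ge0 ?exprn_ge0 ?divr_ge0 ?expR_ge0 ?ler0n //; last first.
  by apply: pow_1B_ge; rewrite ?expR_ge0 //; lia.
rewrite ler_pdivrMr ?ltr0n ?fact_gt0 // -mulrA [_ ^+ m * _]mulrC mulrA.
have -> : (expR (- lam) / 2) ^+ m = (expR (- lam) / n%:R) ^+ m * (n%:R / 2) ^+ m.
  by rewrite -exprMn; congr (_ ^+ _); field; lra.
by rewrite mulrC ler_wpM2r ?exprn_ge0 ?divr_ge0 ?expR_ge0 ?ler0n.
Qed.

End estimates.

Section independence.
Context {d : measure_display} {T : measurableType d} {R : realType}.
Context {P : probability T R} {xi : nat -> T -> R}.
Hypotheses (xi_meas : forall i, measurable_fun [set: T] (xi i))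
  (xi_indep : mutually_independent P xi).

Lemma measurable_xi_preimage (i : nat) (B : set R) :
  measurable B -> measurable (xi i @^-1` B).
Proof. by move=> mB; rewrite -[_ @^-1` _]setTI; exact: xi_meas. Qed.

Lemma Pr_forall_ord (n : nat) (C : 'I_n -> set R) : (forall i, measurable (C i)) ->
  Pr P [set t | forall i, C i (xi i t)] = \prod_(i < n) Pr P (xi i @^-1` C i).
Proof.
move=> mC; pose B k := if insub k is Some i then C i else setT.
have BE (i : 'I_n) : B i = C i by rewrite /B valK.
have mB k : measurable (B k) by rewrite /B; case: insub.
have := xi_indep _ B (iota_uniq 0 n) mB.
rewrite -val_enum_ord !big_map -enumT !big_enum /= (eq_bigl xpredT) //.
rewrite [X in _ = X](eq_bigl xpredT) // => indep.
apply/EFin_inj; rewrite -prodEFin -PrE; last first.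
  by apply: measurable_forall_fin => i; exact: measurable_xi_preimage.
have -> : [set t | forall i, C i (xi i t)] = \big[setI/setT]_(i < n) (xi i @^-1` B i).
  apply/seteqP; split=> t; last by move=> + i; rewrite (bigD1 i) //= BE => -[].
  by move=> h; elim/big_ind: _ => // i _; rewrite /= BE; exact: h.
rewrite indep; apply: eq_big => // i _.
by rewrite BE -PrE //; exact: measurable_xi_preimage.
Qed.

End independence.

Section theta_star.
Context {R : realType} {lam : R}.
Hypothesis lam_gt0 : 0 < lam.

Lemma expR_mul_theta_star (n : nat) : (0 < n)%N -> expR (lam * theta_star lam n) = n%:R.
Proof.
by move=> n_gt0; rewrite /theta_star mulrA divff ?gt_eqF // mul1r lnK // posrE ltr0n.
Qed.

Lemma theta_star_ge2 (n : nat) : expR (2 * lam) <= n%:R -> 2 <= theta_star lam n.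
Proof.
move=> le_n; have n_pos : (0 : R) < n%:R by apply: lt_le_trans le_n; exact: expR_gt0.
by rewrite /theta_star ler_pdivlMl // mulrC -ler_expR lnK ?posrE.
Qed.

End theta_star.

Section random_threshold_graph.
Context {d : measure_display} {T : measurableType d} {R : realType}.
Context {P : probability T R} {lam : R} {xi : nat -> T -> R}.
Hypotheses (lam_gt0 : 0 < lam) (xi_meas : forall i, measurable_fun [set: T] (xi i))
  (xi_indep : mutually_independent P xi) (xi_exp : forall i, exponential_rv P lam (xi i)).

Let n_gt0 (n : nat) : expR (2 * lam) <= n%:R -> (0 < n)%N.
Proof. by move=> le_n; rewrite -(ltr0n R); apply: lt_le_trans le_n; exact: expR_gt0. Qed.

Lemma Pr_fit_high (i n : nat) : expR (2 * lam) <= n%:R ->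
  Pr P (xi i @^-1` [set` fit_high (theta_star lam n)]) = expR (- lam) / n%:R.
Proof.
move=> le_n; have th_ge2 := theta_star_ge2 lam_gt0 _ le_n.
rewrite (Pr_exponential_gt (xi_meas i) (xi_exp i)) max_l; last by lra.
rewrite mulrDr mulr1 mulNr expRD [expR (- (_ * _))]expRN.
by rewrite (expR_mul_theta_star lam_gt0) ?n_gt0 // mulrC.
Qed.

Lemma Pr_fit_mid (i n : nat) : expR (2 * lam) <= n%:R ->
  Pr P (xi i @^-1` [set` fit_mid (theta_star lam n)]) = 1 - expR lam / n%:R.
Proof.
move=> le_n; have th_ge2 := theta_star_ge2 lam_gt0 _ le_n.
rewrite (Pr_exponential_itv (xi_meas i) (xi_exp i)); last by lra.
rewrite (@max_r _ _ (-1)) ?(@max_l _ _ (_ - 1)); try lra.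
rewrite mulr0 expR0 mulrDr mulrN1 mulNr opprK expRD [expR (- (_ * _))]expRN.
by rewrite (expR_mul_theta_star lam_gt0) ?n_gt0 // mulrC.
Qed.

Lemma Pr_fit_low (i : nat) : Pr P (xi i @^-1` [set` fit_low]) = 1 - expR (- lam).
Proof.
rewrite (Pr_exponential_itv (xi_meas i) (xi_exp i)); last by lra.
by rewrite max_r ?max_l ?mulr0 ?expR0 ?mulr1 //; lra.
Qed.

Lemma measurable_separated (n : nat) (th : R) : measurable (separated xi n th).
Proof.
have mA (i : 'I_n) : measurable (xi i @^-1` ([set` fit_mid th] `|` [set` fit_high th])).
  by apply: measurable_xi_preimage => //; apply: measurableU; exact: measurable_itv.
exact: measurable_forall_fin mA.
Qed.

Lemma measurable_high_nodes (n : nat) (th : R) (A : set {set 'I_n}) :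
  measurable (high_nodes xi n th @^-1` A).
Proof.
apply: measurable_finset_preimage => i; rewrite /high_nodes.
under eq_set do rewrite finset.in_set.
exact: measurable_xi_preimage xi_meas i _ (measurable_itv _).
Qed.

Lemma measurable_degree_set (n : nat) (th : R) (dg : nat) (A : set {set 'I_n}) :
  measurable (degree_set xi n th dg @^-1` A).
Proof.
apply: measurable_finset_preimage => k; under eq_set do rewrite finset.in_set tdegreeE.
pose nbrs t := [set l | (l != k) && (th < xi k t + xi l t)]%SET.
suff mnbrs l : measurable [set t | l \in nbrs t].
  exact: (measurable_finset_preimage _ nbrs [set B : {set 'I_n} | #|B| == dg] mnbrs).
under eq_set do rewrite finset.in_set.
case: (l != k) => /=; last by rewrite (_ : [set _ | _] = set0) //; apply/seteqP; split.
have mD := measurable_realfun.measurable_funD (xi_meas k) (xi_meas l).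
have := mD measurableT _ (measurable_itv `]th, +oo[).
by rewrite setTI; congr measurable; apply/seteqP; split=> t; rewrite /= in_itv /= andbT.
Qed.

Lemma measurable_frac_degree (n : nat) (th : R) (dg : nat) (B : set R) :
  measurable [set t | B (frac_degree xi n th dg t)].
Proof.
under eq_set do rewrite frac_degreeE.
exact: (measurable_degree_set n th dg [set D : {set 'I_n} | B (#|D|%:R / n%:R)]).
Qed.

Lemma Pr_profile (n : nat) (S : {set 'I_n}) (F : 'I_n -> interval R) :
  expR (2 * lam) <= n%:R ->
  Pr P [set t | forall i : 'I_n,
    xi i t \in (if i \in S then fit_high (theta_star lam n) else F i)] =
  (expR (- lam) / n%:R) ^+ #|S| * \prod_(i in ~: S) Pr P (xi i @^-1` [set` F i]).
Proof.
move=> le_n; pose C i := [set` if i \in S then fit_high (theta_star lam n) else F i].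
have mC i : measurable (C i) by exact: measurable_itv.
rewrite [LHS](Pr_forall_ord xi_meas xi_indep _ _ mC) (bigID (mem S)) /=.
rewrite (eq_bigr (fun=> expR (- lam) / n%:R)) => [|i iS]; last by rewrite /C iS Pr_fit_high.
rewrite prodr_const; congr (_ * _); apply: eq_big => [i | i iS]; first by rewrite inE.
by rewrite /C (negbTE iS).
Qed.

Lemma Pr_separated_card_high (n m : nat) : expR (2 * lam) <= n%:R ->
  Pr P (separated xi n (theta_star lam n) `&`
        high_nodes xi n (theta_star lam n) @^-1` [set S : {set 'I_n} | #|S| == m]) =
  'C(n, m)%:R * (expR (- lam) / n%:R) ^+ m * (1 - expR lam / n%:R) ^+ (n - m).
Proof.
move=> le_n; have mH S := measurable_high_nodes n (theta_star lam n) [set S].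
rewrite Pr_fin_partition //; last exact: measurable_separated.
rewrite (eq_bigr (fun=> (expR (- lam) / n%:R) ^+ m * (1 - expR lam / n%:R) ^+ (n - m))).
  have := card_draws 'I_n m; rewrite card_ord cardsE => <-.
  by rewrite sumr_const -mulrA mulr_natl.
move=> S /eqP card_S; rewrite separated_high_nodesE Pr_profile // card_S.
under eq_bigr do rewrite Pr_fit_mid //.
rewrite prodr_const.
by have := cardsC S; rewrite card_ord card_S => /(canRL (addKn m)) <-.
Qed.

Lemma Pr_separated_low_card_high (n m : nat) (k : 'I_n) : expR (2 * lam) <= n%:R ->
  Pr P (separated xi n (theta_star lam n) `&` xi k @^-1` [set` fit_low] `&`
        high_nodes xi n (theta_star lam n) @^-1`
          [set S : {set 'I_n} | (#|S| == m) && (k \notin S)]) =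
  'C(n.-1, m)%:R * (expR (- lam) / n%:R) ^+ m * (1 - expR (- lam)) *
  (1 - expR lam / n%:R) ^+ (n.-1 - m).
Proof.
move=> le_n; have th_ge2 := theta_star_ge2 lam_gt0 _ le_n.
have mH S := measurable_high_nodes n (theta_star lam n) [set S].
rewrite Pr_fin_partition //; last first.
  by apply: measurableI; [exact: measurable_separated | exact: measurable_xi_preimage].
rewrite (eq_bigr (fun=> (expR (- lam) / n%:R) ^+ m * (1 - expR (- lam)) *
                        (1 - expR lam / n%:R) ^+ (n.-1 - m))).
  have := cards_draws [set~ k] m; rewrite cardsC1 card_ord => <-.
  rewrite sumr_const -!mulrA mulr_natl; congr (_ *+ _); apply: eq_card => S.
  by rewrite !inE andbC finset.subsetC finset.sub1set finset.in_setC.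
move=> S /andP[/eqP card_S kS]; rewrite separated_low_high_nodesE // Pr_profile // card_S.
rewrite -mulrA (bigD1 k) ?finset.in_setC //= eqxx Pr_fit_low; congr (_ * (_ * _)).
under eq_bigr => i /andP[_ /negbTE ->] do rewrite Pr_fit_mid //.
rewrite prodr_const; congr (_ ^+ _).
rewrite (eq_card (_ : _ =i ~: S :\ k)) => [|i]; last by rewrite -topredE /= !inE andbC.
have := cardsD1 k (~: S); rewrite finset.in_setC kS add1n => card_notS.
have := cardsC S; rewrite card_ord card_S card_notS addnS => /(congr1 predn) /= <-.
by rewrite addKn.
Qed.

Lemma Pr_frac_degree_eq0_ge (n dg : nat) : big_enough lam dg.+2 n ->
  kappa lam dg.+2 <= Pr P [set t | frac_degree xi n (theta_star lam n) dg t = 0].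
Proof.
move=> [le_dg le_n le_exp]; have th_ge2 := theta_star_ge2 lam_gt0 _ le_n.
pose E := separated xi n (theta_star lam n) `&`
  high_nodes xi n (theta_star lam n) @^-1` [set S : {set 'I_n} | #|S| == dg.+2].
apply: (@le_trans _ _ (Pr P E)).
  by rewrite Pr_separated_card_high //; apply: binomial_term_ge; rewrite ?leqnn ?leqnSn.
apply: Pr_le.
- by apply: measurableI; [exact: measurable_separated | exact: measurable_high_nodes].
- exact: (measurable_frac_degree n _ dg [set 0]).
move=> t [sep /eqP card_high]; apply: frac_degree_eq0 sep card_high; lra.
Qed.

Lemma Pr_mem_degree_set_ge (n dg : nat) (k : 'I_n) : big_enough lam dg n ->
  degree_lb lam dg <= Pr P [set t | k \in degree_set xi n (theta_star lam n) dg t].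
Proof.
move=> [le_dg le_n le_exp]; have th_ge2 := theta_star_ge2 lam_gt0 _ le_n.
pose E := separated xi n (theta_star lam n) `&` xi k @^-1` [set` fit_low] `&`
  high_nodes xi n (theta_star lam n) @^-1`
    [set S : {set 'I_n} | (#|S| == dg) && (k \notin S)].
apply: (@le_trans _ _ (Pr P E)).
  rewrite /degree_lb Pr_separated_low_card_high // [X in _ <= X]mulrAC.
  have c_ge0 : 0 <= 1 - expR (- lam) by rewrite subr_ge0 expR_le1 oppr_le0 ltW.
  rewrite ler_wpM2r //.
  by apply: binomial_term_ge; rewrite ?prednK ?leq_pred //; lia.
apply: Pr_le.
- apply: measurableI; last exact: measurable_high_nodes.
  by apply: measurableI; [exact: measurable_separated | exact: measurable_xi_preimage].
- exact: (measurable_degree_set n _ dg [set D : {set 'I_n} | k \in D]).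
move=> t [[sep low_k] /andP[/eqP card_high _]].
by rewrite /= finset.in_set tdegree_fit_low // card_high.
Qed.

Lemma Pr_frac_degree_gt_ge (n dg : nat) : big_enough lam dg n ->
  degree_lb lam dg / 2 <=
  Pr P [set t | degree_lb lam dg / 2 < frac_degree xi n (theta_star lam n) dg t].
Proof.
move=> big_n; set b := degree_lb lam dg; have b_gt0 : 0 < b by exact: degree_lb_gt0.
have n_pos : (0 : R) < n%:R by case: big_n => ? _ _; rewrite ltr0n; lia.
have mD k := measurable_degree_set n (theta_star lam n) dg [set D : {set 'I_n} | k \in D].
have sum_ge : n%:R * b <=
    \sum_(k < n) Pr P [set t | k \in degree_set xi n (theta_star lam n) dg t].
  apply: le_trans (_ : \sum_(k < n) b <= _); first by rewrite sumr_const card_ord mulr_natl.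
  by apply: ler_sum => k _; exact: Pr_mem_degree_set_ge.
have b2_ge0 : 0 <= b / 2 by lra.
have := le_trans sum_ge (sum_Pr_mem_le P _ _ (b / 2) mD b2_ge0); rewrite card_ord => ineq.
under eq_set do rewrite frac_degreeE.
by rewrite -(ler_pM2l n_pos); nra.
Qed.

End random_threshold_graph.

Theorem proposition7 (R : realType) (d : measure_display) (T : measurableType d)
  (P : probability T R) (lam : R) (xi : nat -> T -> R) :
  0 < lam ->
  (forall i, measurable_fun [set: T] (xi i)) ->
  mutually_independent P xi ->
  (forall i, exponential_rv P lam (xi i)) ->
  forall dg : nat, forall c : R,
    ~ cvg_in_prob P
        (fun m => frac_degree xi m.+2 (theta_star lam m.+2) dg) c.
Proof.
move=> lam_gt0 xi_meas xi_indep xi_exp dg c.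
set b := degree_lb lam dg; have b_gt0 : 0 < b by exact: degree_lb_gt0.
have mfrac n (B : set R) := measurable_frac_degree xi_meas n.+2 (theta_star lam n.+2) dg B.
have [c_ge|c_lt] := lerP (b / 4) `|c|.
  apply: (not_cvg_in_prob P _ c (b / 8) (kappa lam dg.+2)); [lra | exact: kappa_gt0 |].
  near=> n; apply: le_trans (Pr_frac_degree_eq0_ge lam_gt0 xi_meas xi_indep xi_exp n.+2 dg _) _.
    by near: n; exact: big_enough_near.
  apply: Pr_le; [exact: mfrac n [set 0] | exact: mfrac n [set x | b / 8 < `|x - c|] |].
  by move=> t /= ->; rewrite sub0r normrN; lra.
apply: (not_cvg_in_prob P _ c (b / 4) (b / 2)); [lra | lra |].
near=> n; apply: le_trans (Pr_frac_degree_gt_ge lam_gt0 xi_meas xi_indep xi_exp n.+2 dg _) _.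
  by near: n; exact: big_enough_near.
apply: Pr_le; [exact: mfrac n [set x | b / 2 < x] | exact: mfrac n [set x | b / 4 < `|x - c|] |].
move=> t /=; rewrite -/b => ?; apply: lt_le_trans (ler_norm _).
by have := ler_norm c; lra.
Unshelve. all: by end_near.
Qed.
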